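(* Let $G$ be an additive group, let $X$ be a complete non-Archimedean normed space over a field $K$ with a non-trivial non-Archimedean valuation $|\cdot|$, and let $k$ be a fixed integer with $k\neq 0,\pm1$. For $f:G\to X$ put $$Df(x,y)=f(x+ky)+f(x-ky)-k^2f(x+y)-k^2f(x-y)-2(1-k^2)f(x).$$ Let $\varphi:G\times G\to[0,\infty)$, and for $u\in G$ write $$\Phi(u)=\max\{|2(k^2-1)|\varphi(u,u),\ |k^2|\varphi(2u,u),\ \varphi(u,2u),\ \varphi((k+1)u,u),\ \varphi((k-1)u,u),\ \varphi(u,u),\ |k^2|\varphi(2u,2u),\ |2(k^2-1)|\varphi(u,2u),\ \varphi(u,3u),\ \varphi((2k+1)u,u),\ \varphi((2k-1)u,u)\}.$$ Suppose that $$\lim_{n\to\infty}\frac{1}{|2^n|}\max\{\varphi(2^{n+1}x,2^{n+1}y),\ |8|\varphi(2^nx,2^ny)\}=0,\qquad \lim_{n\to\infty}\frac{1}{|2^nk^2(k^2-1)|}\Phi(2^{n-1}x)=0$$ for all $x,y\in G$, and that for each $x\in G$ the limit $$\tilde{\varphi}_A(x):=\lim_{n\to\infty}\max\Big\{\frac{1}{|2^i|}\Phi(2^{i-1}x):\ 0\le i<n\Big\}$$ exists. Suppose that $f:G\to X$ is an odd function satisfying $\|Df(x,y)\|\le\varphi(x,y)$ for all $x,y\in G$. Then there exists an additive function $A:G\to X$ such that $$\|f(2x)-8f(x)-A(x)\|\le\frac{1}{|2k^2(k^2-1)|}\tilde{\varphi}_A(x)\qquad(x\in G).$$ Moreover,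 if $$\lim_{i\to\infty}\lim_{n\to\infty}\max\Big\{\frac{1}{|2^j|}\Phi(2^{j-1}x):\ i\le j<n+i\Big\}=0,$$ then $A$ is the unique additive function satisfying this inequality.
   Context: A non-Archimedean norm satisfies $\|x\|=0\iff x=0$, $\|rx\|=|r|\|x\|$ and $\|x+y\|\le\max\{\|x\|,\|y\|\}$. In the proof, $g(x)=f(2x)-8f(x)$ and $A(x)=\lim_{n\to\infty}g(2^nx)/2^n$. *)

From HB Require Import structures.
From mathcomp Require Import all_boot all_order all_algebra.
From mathcomp Require Import all_classical all_reals all_analysis.
Set Implicit Arguments. Unset Strict Implicit. Unset Printing Implicit Defensive.
Import Order.TTheory GRing.Theory Num.Theory.
Local Open Scope ring_scope.

Definition nA_valuation (R : realType) (K : fieldType) (v : K -> R) : Prop :=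
  [/\ forall r, 0 <= v r,
      forall r, v r = 0 <-> r = 0,
      forall r s, v (r * s) = v r * v s &
      forall r s, v (r + s) <= Num.max (v r) (v s)].

Definition nontrivial_valuation (R : realType) (K : fieldType) (v : K -> R) : Prop :=
  exists r : K, v r <> 0 /\ v r <> 1.

Definition nA_norm (R : realType) (K : fieldType) (X : lmodType K)
    (v : K -> R) (nrm : X -> R) : Prop :=
  [/\ forall x, nrm x = 0 <-> x = 0,
      forall (r : K) x, nrm (r *: x) = v r * nrm x &
      forall x y, nrm (x + y) <= Num.max (nrm x) (nrm y)].

Definition norm_complete (R : realType) (K : fieldType) (X : lmodType K)
    (nrm : X -> R) : Prop :=
  forall u : nat -> X,
    (forall e : R, 0 < e -> exists N, forall m n, (N <= m)%N -> (N <= n)%N ->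
        nrm (u m - u n) < e) ->
    exists l : X, forall e : R, 0 < e -> exists N, forall n, (N <= n)%N ->
        nrm (u n - l) < e.

Definition additive_fun (G : zmodType) (X : zmodType) (A : G -> X) : Prop :=
  forall x y, A (x + y) = A x + A y.

Definition Dk (G : zmodType) (X : zmodType) (k : int) (f : G -> X) (x y : G) : X :=
  f (x + y *~ k) + f (x - y *~ k) - f (x + y) *~ (k ^+ 2) - f (x - y) *~ (k ^+ 2)
  - f x *~ (2 * (1 - k ^+ 2)).

Definition Phi (R : realType) (K : fieldType) (G : zmodType) (v : K -> R) (k : int)
    (phi : G -> G -> R) (u : G) : R :=
  let c := v ((2 * (k ^+ 2 - 1))%:~R) in
  let k2 := v ((k ^+ 2)%:~R) in
  \big[Num.max/0]_(t <- [:: c * phi u u; k2 * phi (u *+ 2) u; phi u (u *+ 2);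
         phi (u *~ (k + 1)) u; phi (u *~ (k - 1)) u; phi u u;
         k2 * phi (u *+ 2) (u *+ 2); c * phi u (u *+ 2); phi u (u *+ 3);
         phi (u *~ (2 * k + 1)) u; phi (u *~ (2 * k - 1)) u]) t.

(* The term (1/|2^i|) Phi(2^{i-1} x) of the paper, for i = j+1 >= 1,
   i.e. (1/|2^(j+1)|) Phi(2^j x). *)
Definition PhiTerm (R : realType) (K : fieldType) (G : zmodType) (v : K -> R) (k : int)
    (phi : G -> G -> R) (x : G) (j : nat) : R :=
  Phi v k phi (x *+ (2 ^ j)) / v ((2%:R : K) ^+ j.+1).

(* max { (1/|2^i|) Phi(2^{i-1}x) : i0 <= i < i0 + n }, written with j = i - 1 *)
Definition PhiMax (R : realType) (K : fieldType) (G : zmodType) (v : K -> R) (k : int)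
    (phi : G -> G -> R) (x : G) (i0 n : nat) : R :=
  \big[Num.max/0]_(i0 <= j < i0 + n) PhiTerm v k phi x j.

From HB Require Import structures.
From mathcomp Require Import all_boot all_order all_algebra.
From mathcomp Require Import all_classical all_reals all_analysis.
From mathcomp Require Import ring lra zify.
Import Order.TTheory GRing.Theory Num.Theory.
Import numFieldNormedType.Exports.
Local Open Scope classical_set_scope.
Local Open Scope ring_scope.
Set Implicit Arguments. Unset Strict Implicit. Unset Printing Implicit Defensive.

(* With g(x) = f(2x) - 8 f(x), an explicit combination of nine
   instances of Df shows |k^2 (k^2-1)| ||g(2u) - 2 g(u)|| <= Phi(u).  Hence the
   sequence g(2^n x)/2^n has consecutive differences bounded by
   Phi(2^n x)/|2^(n+1) k^2 (k^2-1)| -> 0; in an ultrametric space this makes it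
   Cauchy, and its limit A satisfies the distance bound by the strong triangle
   inequality.  A is odd, satisfies A(2x) = 2 A(x) and DA = 0, and the functional
   equation DA = 0 forces the fourth central difference of A to vanish; together
   with oddness and A(2x) = 2 A(x) this gives additivity.  Uniqueness: for two
   such maps the distance at x equals the distance at 2^i x divided by |2^i|,
   which is bounded by the tail maxima of Phi and so tends to 0. *)

(* Z-linear identities in a Z-module M are checked by [ring] in the commutative
   ring Z x M (trivial extension: (a, m) (b, n) = (a b, b m + a n)), into which
   M embeds additively as the square-zero ideal 0 x M. *)
Section TrivialExtension.
Variable M : zmodType.

Definition zext := (int * M)%type.
HB.instance Definition _ := GRing.Zmodule.on zext.

Definition zext_one : zext := (1, 0).
Definition zext_mul (a b : zext) : zext := (a.1 * b.1, a.2 *~ b.1 + b.2 *~ a.1).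

Lemma zext_mulA : associative zext_mul.
Proof.
move=> [a m] [b n] [c p]; rewrite /zext_mul /=; congr pair; first by rewrite mulrA.
rewrite !mulrzDl -!mulrzA addrA; congr (_ + _ + _); congr (_ *~ _); exact: mulrC.
Qed.

Lemma zext_mulC : commutative zext_mul.
Proof. by move=> [a m] [b n]; rewrite /zext_mul /= mulrC addrC. Qed.

Lemma zext_mul1 : left_id zext_one zext_mul.
Proof. by move=> [a m]; rewrite /zext_mul /= mul1r mul0rz add0r mulr1z. Qed.

Lemma zext_mulDl : left_distributive zext_mul +%R.
Proof.
move=> [a m] [b n] [c p]; rewrite /zext_mul /=; congr pair; first exact: mulrDl.
by rewrite mulrzDl mulrzDr addrACA.
Qed.

Lemma zext_one_neq0 : zext_one != 0.
Proof. by apply/eqP => -[]. Qed.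

HB.instance Definition _ := GRing.Zmodule_isComNzRing.Build zext
  zext_mulA zext_mulC zext_mul1 zext_mulDl zext_one_neq0.

Definition zinj (m : M) : zext := (0, m).

Lemma zinj_inj : injective zinj. Proof. by move=> a b []. Qed.
Lemma zinj0 : zinj 0 = 0. Proof. by []. Qed.
Lemma zinjD a b : zinj (a + b) = zinj a + zinj b.
Proof. by rewrite /zinj; congr pair; rewrite addr0. Qed.
Lemma zinjN a : zinj (- a) = - zinj a.
Proof. by rewrite /zinj; congr pair; rewrite oppr0. Qed.
Lemma zinjB a b : zinj (a - b) = zinj a - zinj b.
Proof. by rewrite zinjD zinjN. Qed.

Lemma natr_zext (n : nat) : (n%:R : zext) = (n%:R, 0).
Proof.
elim: n => [//|n IH]; rewrite -natr1 IH -[in RHS]natr1.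
by congr pair; rewrite addr0.
Qed.

Lemma intr_zext (z : int) : (z%:~R : zext) = (z, 0).
Proof.
case: z => n; first by rewrite -[_%:~R]/(n%:R) natr_zext natz.
rewrite NegzE mulrNz -[n.+1%:~R]/(n.+1%:R) natr_zext natz.
by apply/eqP; rewrite xpair_eqE /= oppr0 !eqxx.
Qed.

Lemma zinjMz a (z : int) : zinj (a *~ z) = zinj a * z%:~R.
Proof. by rewrite intr_zext [RHS]/GRing.mul /= /zext_mul /= mul0r mul0rz addr0. Qed.

Lemma zinjMn a (n : nat) : zinj (a *+ n) = zinj a * n%:R.
Proof. by rewrite pmulrn zinjMz. Qed.

End TrivialExtension.

Ltac zmod_ring :=
  apply: zinj_inj; rewrite ?(zinjD, zinjB, zinjN, zinjMz, zinjMn, zinj0); ring.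

Lemma eq0_by_multiple (M : zmodType) (c : int) (L L' : M) :
  L' = 0 -> L - L' *~ c = 0 -> L = 0.
Proof. by move=> ->; rewrite mul0rz subr0. Qed.
Arguments eq0_by_multiple {M} c {L L'}.

Lemma lmod_mulrn_eq0 (K : fieldType) (X : lmodType K) (w : X) (n : nat) :
  (n%:R : K) != 0 -> w *+ n = 0 -> w = 0.
Proof.
by move=> hn; rewrite -scaler_nat => /eqP; rewrite scaler_eq0 (negbTE hn) => /eqP.
Qed.

Lemma additive_mulrn (G X : zmodType) (F : G -> X) :
  additive_fun F -> forall x m, F (x *+ m) = F x *+ m.
Proof.
move=> hF x; elim=> [|m IH]; last by rewrite !mulrS hF IH.
by apply: (@addrI _ (F 0)); rewrite -hF !mulr0n !addr0.
Qed.

Section FunctionalEquation.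
Variables (G X : zmodType) (k : int).

Definition diff2 (A : G -> X) (x y : G) : X := A (x + y) + A (x - y) - A x *+ 2.

Definition diff4 (A : G -> X) (x y : G) : X :=
  A (x + y *+ 2) - A (x + y) *+ 4 + A x *+ 6 - A (x - y) *+ 4 + A (x - y *+ 2).

(* Puts the arguments of f in a chosen normal form, so that the atoms [zinj (f _)]
   seen by [ring] agree across different instances. *)
Lemma DkE (f : G -> X) p q a b c d :
  p + q *~ k = a -> p - q *~ k = b -> p + q = c -> p - q = d ->
  Dk k f p q = f a + f b - f c *~ (k ^+ 2) - f d *~ (k ^+ 2) - f p *~ (2 * (1 - k ^+ 2)).
Proof. by move=> <- <- <- <-. Qed.

Lemma diff4E (A : G -> X) p q a b c d :
  p + q *+ 2 = a -> p + q = b -> p - q = c -> p - q *+ 2 = d ->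
  diff4 A p q = A a - A b *+ 4 + A p *+ 6 - A c *+ 4 + A d.
Proof. by move=> <- <- <- <-. Qed.

Lemma Dk_eq0_diff4 (A : G -> X) : (forall p q, Dk k A p q = 0) ->
  forall x y, diff4 A x y *~ (k ^+ 2 * (k ^+ 2 - 1)) = 0.
Proof.
move=> hD x y.
have h1 := hD x (y *+ 2); rewrite (@DkE A _ _ (x + y *~ (2 * k)) (x + y *~ (- (2 * k)))
  (x + y *+ 2) (x - y *+ 2)) in h1; try zmod_ring.
have h2 := hD (x + y *~ k) y; rewrite (@DkE A _ _ (x + y *~ (2 * k)) x
  (x + y *~ (k + 1)) (x + y *~ (k - 1))) in h2; try zmod_ring.
have h3 := hD (x + y *~ (- k)) y; rewrite (@DkE A _ _ x (x + y *~ (- (2 * k)))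
  (x + y *~ (- k + 1)) (x + y *~ (- k - 1))) in h3; try zmod_ring.
have h4 := hD x y; rewrite (@DkE A _ _ (x + y *~ k) (x + y *~ (- k))
  (x + y) (x - y)) in h4; try zmod_ring.
have h5 := hD (x + y) y; rewrite (@DkE A _ _ (x + y *~ (k + 1)) (x + y *~ (- k + 1))
  (x + y *+ 2) x) in h5; try zmod_ring.
have h6 := hD (x - y) y; rewrite (@DkE A _ _ (x + y *~ (k - 1)) (x + y *~ (- k - 1))
  x (x - y *+ 2)) in h6; try zmod_ring.
apply: (eq0_by_multiple 1 h1); apply: (eq0_by_multiple (-1) h2).
apply: (eq0_by_multiple (-1) h3); apply: (eq0_by_multiple (2 * k ^+ 2 - 2) h4).
apply: (eq0_by_multiple (- k ^+ 2) h5); apply: (eq0_by_multiple (- k ^+ 2) h6).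
rewrite /diff4; zmod_ring.
Qed.

Lemma diff4_eq0_diff2_jensen (A : G -> X) : (forall p q, diff4 A p q = 0) ->
  forall x y z, (diff2 A (x + z) y + diff2 A (x - z) y - diff2 A x y *+ 2) *+ 12 = 0.
Proof.
move=> hQ x y z.
have h0 := hQ x (y + z); rewrite (@diff4E A _ _ (x + y *+ 2 + z *+ 2) (x + z + y)
  (x - z - y) (x - y *+ 2 - z *+ 2)) in h0; try zmod_ring.
have h1 := hQ x (y - z); rewrite (@diff4E A _ _ (x + y *+ 2 - z *+ 2) (x - z + y)
  (x + z - y) (x - y *+ 2 + z *+ 2)) in h1; try zmod_ring.
have h2 := hQ x z; rewrite (@diff4E A _ _ (x + z *+ 2) (x + z) (x - z)
  (x - z *+ 2)) in h2; try zmod_ring.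
have h3 := hQ (x + z *+ 2) y; rewrite (@diff4E A _ _ (x + y *+ 2 + z *+ 2)
  (x + y + z *+ 2) (x - y + z *+ 2) (x - y *+ 2 + z *+ 2)) in h3; try zmod_ring.
have h4 := hQ (x - z *+ 2) y; rewrite (@diff4E A _ _ (x + y *+ 2 - z *+ 2)
  (x + y - z *+ 2) (x - y - z *+ 2) (x - y *+ 2 - z *+ 2)) in h4; try zmod_ring.
have h5 := hQ (x + y) z; rewrite (@diff4E A _ _ (x + y + z *+ 2) (x + z + y)
  (x - z + y) (x + y - z *+ 2)) in h5; try zmod_ring.
have h6 := hQ (x - y) z; rewrite (@diff4E A _ _ (x - y + z *+ 2) (x + z - y)
  (x - z - y) (x - y - z *+ 2)) in h6; try zmod_ring.
apply: (eq0_by_multiple 1 h0); apply: (eq0_by_multiple 1 h1).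
apply: (eq0_by_multiple 6 h2); apply: (eq0_by_multiple (-1) h3).
apply: (eq0_by_multiple (-1) h4); apply: (eq0_by_multiple (-4) h5).
apply: (eq0_by_multiple (-4) h6).
rewrite /diff2; zmod_ring.
Qed.

(* The identity behind the choice of the eleven terms in Phi. *)
Lemma Dk_double_step_identity (f : G -> X) :
  (forall x, f (- x) = - f x) -> f 0 = 0 -> forall u,
  ((f (u *+ 2 *+ 2) - f (u *+ 2) *+ 8) - (f (u *+ 2) - f u *+ 8) *+ 2)
    *~ (k ^+ 2 * (k ^+ 2 - 1)) =
  Dk k f u (u *+ 3) - Dk k f (u *~ (2 * k + 1)) u + Dk k f (u *~ (2 * k - 1)) u
  - Dk k f (u *+ 2) (u *+ 2) *~ (k ^+ 2) + Dk k f u u *~ (4 * k ^+ 2 - 3)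
  + Dk k f u (u *+ 2) *~ (2 * k ^+ 2) - Dk k f (u *+ 2) u *~ (2 * k ^+ 2)
  - Dk k f (u *~ (k + 1)) u *~ 2 + Dk k f (u *~ (k - 1)) u *~ 2.
Proof.
move=> hodd hf0 u.
rewrite -mulrnA.
rewrite (@DkE f u u (u *~ (k + 1)) (- (u *~ (k - 1))) (u *+ 2) 0); try zmod_ring.
rewrite (@DkE f (u *+ 2) u (u *~ (k + 2)) (- (u *~ (k - 2))) (u *+ 3) u); try zmod_ring.
rewrite (@DkE f u (u *+ 2) (u *~ (2 * k + 1)) (- (u *~ (2 * k - 1))) (u *+ 3) (- u));
  try zmod_ring.
rewrite (@DkE f (u *~ (k + 1)) u (u *~ (2 * k + 1)) u (u *~ (k + 2)) (u *~ k));
  try zmod_ring.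
rewrite (@DkE f (u *~ (k - 1)) u (u *~ (2 * k - 1)) (- u) (u *~ k) (u *~ (k - 2)));
  try zmod_ring.
rewrite (@DkE f (u *+ 2) (u *+ 2) (u *~ (2 * k + 2)) (- (u *~ (2 * k - 2)))
  (u *+ (2 * 2)) 0); try zmod_ring.
rewrite (@DkE f u (u *+ 3) (u *~ (3 * k + 1)) (- (u *~ (3 * k - 1)))
  (u *+ (2 * 2)) (- (u *+ 2))); try zmod_ring.
rewrite (@DkE f (u *~ (2 * k + 1)) u (u *~ (3 * k + 1)) (u *~ (k + 1))
  (u *~ (2 * k + 2)) (u *~ (2 * k))); try zmod_ring.
rewrite (@DkE f (u *~ (2 * k - 1)) u (u *~ (3 * k - 1)) (u *~ (k - 1))
  (u *~ (2 * k)) (u *~ (2 * k - 2))); try zmod_ring.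
rewrite !hodd hf0; zmod_ring.
Qed.

Lemma DkB (h1 h2 : G -> X) x y :
  Dk k (fun z => h1 z - h2 z) x y = Dk k h1 x y - Dk k h2 x y.
Proof. rewrite /Dk; zmod_ring. Qed.

Lemma Dk_mulrn (h : G -> X) (m : nat) x y :
  Dk k (fun z => h z *+ m) x y = Dk k h x y *+ m.
Proof. rewrite /Dk; zmod_ring. Qed.

Lemma Dk_comp_mulrn (h : G -> X) (m : nat) x y :
  Dk k (fun z => h (z *+ m)) x y = Dk k h (x *+ m) (y *+ m).
Proof.
rewrite /Dk (_ : (x + y *~ k) *+ m = x *+ m + y *+ m *~ k); last zmod_ring.
rewrite (_ : (x - y *~ k) *+ m = x *+ m - y *+ m *~ k); last zmod_ring.
by rewrite mulrnDl mulrnBl.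
Qed.

End FunctionalEquation.

Lemma DkZ (K : fieldType) (G : zmodType) (X : lmodType K) (k : int) (h : G -> X)
    (r : K) x y :
  Dk k (fun z => r *: h z) x y = r *: Dk k h x y.
Proof. by rewrite /Dk !scalerMzr !scalerBr !scalerDr. Qed.

Lemma diff4_eq0_additive (K : fieldType) (G : zmodType) (X : lmodType K) (A : G -> X) :
  (2%:R : K) != 0 -> (3%:R : K) != 0 ->
  (forall x, A (- x) = - A x) -> (forall x, A (x *+ 2) = A x *+ 2) ->
  (forall p q, diff4 A p q = 0) -> additive_fun A.
Proof.
move=> h2 h3 hodd hdbl hQ.
have h6 : (6%:R : K) != 0 by rewrite (_ : 6 = 2 * 3)%N // natrM mulf_neq0.
have h12 : (12%:R : K) != 0 by rewrite (_ : 12 = 2 * 6)%N // natrM mulf_neq0.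
have hJ x y z : diff2 A (x + z) y + diff2 A (x - z) y - diff2 A x y *+ 2 = 0.
  exact: lmod_mulrn_eq0 h12 (diff4_eq0_diff2_jensen hQ x y z).
have hA0 : A 0 = 0.
  by apply: (lmod_mulrn_eq0 h2); rewrite mulr2n -{1}oppr0 hodd addNr.
have hE2x x y : diff2 A (x *+ 2) y = diff2 A x y *+ 2.
  have hE0 : diff2 A 0 y = 0 by rewrite /diff2 add0r sub0r hodd hA0 mul0rn subr0 addrN.
  by apply/eqP; rewrite -subr_eq0 -(hJ x y x) subrr hE0 addr0 -mulr2n.
have hE2y x y : diff2 A x (y *+ 2) = diff2 A x y *+ 4.
  by apply/eqP; rewrite -subr_eq0 -(hQ x y) /diff2 /diff4; apply/eqP; zmod_ring.
have hE x y : diff2 A x y = 0.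
  have hEd : diff2 A (x *+ 2) (y *+ 2) = diff2 A x y *+ 2.
    by rewrite /diff2 -mulrnDl -mulrnBl !hdbl -!mulrnDl -mulrnBl.
  apply: (lmod_mulrn_eq0 h6); move: hEd; rewrite hE2y hE2x -mulrnA => /eqP.
  by rewrite -subr_eq0 (_ : 2 * 4 = 6 + 2)%N // mulrnDr addrK => /eqP.
move=> a b; apply/eqP; rewrite -subr_eq0; apply/eqP; apply: (lmod_mulrn_eq0 h2).
have e1 := hE a b; have e2 := hE b a.
rewrite /diff2 (addrC b a) -(opprB a b) hodd in e2; rewrite /diff2 in e1.
by apply: (eq0_by_multiple 1 e1); apply: (eq0_by_multiple 1 e2); zmod_ring.
Qed.

Lemma three_dvd_sqr_sqr_sub1 (k : int) : exists m : int, k ^+ 2 * (k ^+ 2 - 1) = 3 * m.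
Proof.
have hk := divz_eq k 3.
set q := (k %/ 3)%Z in hk; set r := (k %% 3)%Z in hk.
have : r = 0 \/ r = 1 \/ r = 2.
  have : 0 <= r by rewrite modz_ge0.
  have : r < 3 by rewrite ltz_pmod.
  lia.
case=> [hr|[hr|hr]]; rewrite hk hr.
- by exists (3 * q ^+ 2 * (9 * q ^+ 2 - 1)); ring.
- by exists ((q * 3 + 1) ^+ 2 * q * (3 * q + 2)); ring.
- by exists ((q * 3 + 2) ^+ 2 * (3 * q + 1) * (q + 1)); ring.
Qed.

(* 3 divides k^2 (k^2 - 1), so the hypothesis also rules out characteristic 3. *)
Lemma const_neq0_facts (K : fieldType) (k : int) :
  ((2 * k ^+ 2 * (k ^+ 2 - 1))%:~R : K) != 0 ->
  [/\ (2%:R : K) != 0, (3%:R : K) != 0, ((k ^+ 2 * (k ^+ 2 - 1))%:~R : K) != 0 &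
      ((2 * k ^+ 2 * (k ^+ 2 - 1))%:~R : K) = 2%:R * (k ^+ 2 * (k ^+ 2 - 1))%:~R].
Proof.
move=> hc.
have e : ((2 * k ^+ 2 * (k ^+ 2 - 1))%:~R : K) = 2%:R * (k ^+ 2 * (k ^+ 2 - 1))%:~R.
  by rewrite -mulrA intrM.
split => //.
- by apply: contra hc => /eqP h; rewrite e h mul0r.
- apply: contra hc => /eqP h; rewrite e; have [m ->] := three_dvd_sqr_sqr_sub1 k.
  by rewrite intrM (_ : (3 : int)%:~R = (3%:R : K)) // h mul0r mulr0.
- by apply: contra hc => /eqP h; rewrite e h mulr0.
Qed.

Section NonArchimedean.
Variables (R : realType) (K : fieldType) (v : K -> R).
Hypothesis hv : nA_valuation v.

Lemma v_ge0 r : 0 <= v r. Proof. by case: hv. Qed.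
Lemma vM r s : v (r * s) = v r * v s. Proof. by case: hv. Qed.
Lemma vD r s : v (r + s) <= Num.max (v r) (v s). Proof. by case: hv. Qed.
Lemma v_eq0 r : v r = 0 <-> r = 0. Proof. by case: hv. Qed.
Lemma v0 : v 0 = 0. Proof. exact/v_eq0. Qed.

Lemma v_gt0 r : r != 0 -> 0 < v r.
Proof. by move=> hr; rewrite lt_def v_ge0 andbT; apply: contra hr => /eqP /v_eq0 ->. Qed.

Lemma v1 : v 1 = 1.
Proof.
apply: (@mulfI _ (v 1)); last by rewrite -vM !mulr1.
by rewrite gt_eqF // v_gt0 // oner_neq0.
Qed.

Lemma vN1 : v (-1) = 1.
Proof.
have /eqP : v (-1) ^+ 2 = 1 by rewrite expr2 -vM mulrNN mulr1 v1.
by rewrite sqrf_eq1 => /orP [/eqP //|/eqP h]; have := v_ge0 (-1); rewrite h; lra.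
Qed.

Lemma vN r : v (- r) = v r. Proof. by rewrite -mulN1r vM vN1 mul1r. Qed.

Lemma vV r : v r^-1 = (v r)^-1.
Proof.
have [->|hr] := eqVneq r 0; first by rewrite invr0 v0 invr0.
by apply: (@mulfI _ (v r)); rewrite ?gt_eqF ?v_gt0 // -vM !mulfV ?v1 ?gt_eqF ?v_gt0.
Qed.

Lemma v_natr_le1 n : v n%:R <= 1.
Proof.
elim: n => [|n IH]; first by rewrite v0.
by rewrite -natr1; apply: le_trans (vD _ _) _; rewrite ge_max IH v1 lexx.
Qed.

Lemma v_intr_le1 (z : int) : v z%:~R <= 1.
Proof. by case: z => n; rewrite ?NegzE ?mulrNz ?vN v_natr_le1. Qed.

Variables (X : lmodType K) (nrm : X -> R).
Hypothesis hn : nA_norm v nrm.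

Lemma nrmZ (r : K) x : nrm (r *: x) = v r * nrm x. Proof. by case: hn. Qed.
Lemma nrmD_max x y : nrm (x + y) <= Num.max (nrm x) (nrm y). Proof. by case: hn. Qed.
Lemma nrm_eq0 x : nrm x = 0 <-> x = 0. Proof. by case: hn. Qed.
Lemma nrm0 : nrm 0 = 0. Proof. exact/nrm_eq0. Qed.
Lemma nrmN x : nrm (- x) = nrm x. Proof. by rewrite -scaleN1r nrmZ vN1 mul1r. Qed.
Lemma nrmBC x y : nrm (x - y) = nrm (y - x). Proof. by rewrite -opprB nrmN. Qed.

Lemma nrm_ge0 x : 0 <= nrm x.
Proof. by have := nrmD_max x (- x); rewrite addrN nrm0 nrmN maxxx. Qed.

Lemma nrm_le0 x : nrm x <= 0 -> x = 0.
Proof. by move=> h; apply/nrm_eq0/le_anti; rewrite h nrm_ge0. Qed.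

Lemma nrmD_le x y M : nrm x <= M -> nrm y <= M -> nrm (x + y) <= M.
Proof. by move=> h1 h2; apply: le_trans (nrmD_max _ _) _; rewrite ge_max h1 h2. Qed.

Lemma nrmB_le x y M : nrm x <= M -> nrm y <= M -> nrm (x - y) <= M.
Proof. by move=> h1 h2; apply: nrmD_le; rewrite ?nrmN. Qed.

Lemma nrmD_lt x y M : nrm x < M -> nrm y < M -> nrm (x + y) < M.
Proof. by move=> h1 h2; apply: le_lt_trans (nrmD_max _ _) _; rewrite gt_max h1 h2. Qed.

Lemma nrmB_lt x y M : nrm x < M -> nrm y < M -> nrm (x - y) < M.
Proof. by move=> h1 h2; apply: nrmD_lt; rewrite ?nrmN. Qed.

Lemma nrmMz x (z : int) : nrm (x *~ z) = v z%:~R * nrm x.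
Proof. by rewrite -scaler_int nrmZ. Qed.

Lemma nrmMn x (m : nat) : nrm (x *+ m) = v m%:R * nrm x.
Proof. by rewrite -scaler_nat nrmZ. Qed.

Lemma nrmMz_le x (z : int) : nrm (x *~ z) <= nrm x.
Proof. by rewrite nrmMz ler_piMl ?nrm_ge0 ?v_intr_le1. Qed.

Definition nrm_cvg (u : nat -> X) (l : X) :=
  forall e : R, 0 < e -> exists N, forall n, (N <= n)%N -> nrm (u n - l) < e.

Lemma nrm_cvg_unique u l l' : nrm_cvg u l -> nrm_cvg u l' -> l = l'.
Proof.
move=> h1 h2; apply/subr0_eq/nrm_le0/ler_addgt0Pr => e he; rewrite add0r ltW //.
have [N1 hN1] := h1 e he; have [N2 hN2] := h2 e he; set n := maxn N1 N2.
rewrite (_ : l - l' = (l - u n) + (u n - l')); last by rewrite addrA subrK.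
by apply: nrmD_lt; [rewrite nrmBC; apply: hN1 | apply: hN2]; rewrite leq_max leqnn ?orbT.
Qed.

Lemma nrm_cvg_ext u u' l : u =1 u' -> nrm_cvg u l -> nrm_cvg u' l.
Proof. by move=> h hc e /hc [N hN]; exists N => n /hN; rewrite h. Qed.

Lemma nrm_cvg_shift u l : nrm_cvg u l -> nrm_cvg (fun n => u n.+1) l.
Proof. by move=> hc e /hc [N hN]; exists N => n hnN; apply/hN/leqW. Qed.

Lemma nrm_cvgB u u' l l' :
  nrm_cvg u l -> nrm_cvg u' l' -> nrm_cvg (fun n => u n - u' n) (l - l').
Proof.
move=> hc hc' e he; have [N hN] := hc e he; have [N' hN'] := hc' e he.
exists (maxn N N') => n; rewrite geq_max => /andP [/hN h /hN' h'].
by rewrite (_ : _ - _ = (u n - l) - (u' n - l')); [apply: nrmB_lt | zmod_ring].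
Qed.

Lemma nrm_cvgN u l : nrm_cvg u l -> nrm_cvg (fun n => - u n) (- l).
Proof. by move=> hc e /hc [N hN]; exists N => n /hN; rewrite -opprD nrmN. Qed.

Lemma nrm_cvgMz u l (z : int) : nrm_cvg u l -> nrm_cvg (fun n => u n *~ z) (l *~ z).
Proof.
move=> hc e /hc [N hN]; exists N => n /hN.
by rewrite -mulrzBl; apply: le_lt_trans (nrmMz_le _ _).
Qed.

Lemma nrm_cvgMn u l (m : nat) : nrm_cvg u l -> nrm_cvg (fun n => u n *+ m) (l *+ m).
Proof.
move=> /(nrm_cvgMz m); rewrite pmulrn; apply: nrm_cvg_ext => n; exact: pmulrn.
Qed.

Lemma nrm_cvgD u u' l l' :
  nrm_cvg u l -> nrm_cvg u' l' -> nrm_cvg (fun n => u n + u' n) (l + l').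
Proof.
move=> hc /nrm_cvgN /(nrm_cvgB hc); rewrite opprK.
by apply: nrm_cvg_ext => n; rewrite opprK.
Qed.

Lemma nrm_cvg_Dk (G : zmodType) (k : int) (h : nat -> G -> X) (A : G -> X) x y :
  (forall z, nrm_cvg (h^~ z) (A z)) -> nrm_cvg (fun n => Dk k (h n) x y) (Dk k A x y).
Proof.
move=> hc; have hz z c := nrm_cvgMz c (hc z).
exact: nrm_cvgB (nrm_cvgB (nrm_cvgB (nrm_cvgD (hc _) (hc _)) (hz _ _)) (hz _ _)) (hz _ _).
Qed.

Lemma cvg0_eventually_lt (s : nat -> R) : s @ \oo --> 0 ->
  forall e, 0 < e -> exists N, forall n, (N <= n)%N -> s n < e.
Proof.
move=> hs e he; have [N _ hN] := (cvgrPdist_lt _ _).1 hs e he.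
by exists N => n /hN; rewrite sub0r normrN; apply: le_lt_trans; exact: ler_norm.
Qed.

Lemma nrm_cvg0_le (u : nat -> X) (s : nat -> R) :
  (forall n, nrm (u n) <= s n) -> s @ \oo --> 0 -> nrm_cvg u 0.
Proof.
move=> hu hs e /(cvg0_eventually_lt hs) [N hN].
by exists N => n /hN; rewrite subr0; apply: le_lt_trans.
Qed.

(* The strong triangle inequality makes steps tending to 0 enough; no summability. *)
Lemma nrm_cauchy_steps (u : nat -> X) (s : nat -> R) :
  (forall n, nrm (u n.+1 - u n) <= s n) -> s @ \oo --> 0 ->
  forall e : R, 0 < e ->
    exists N, forall m n, (N <= m)%N -> (N <= n)%N -> nrm (u m - u n) < e.
Proof.
move=> hst hs e he; have [N hN] := cvg0_eventually_lt hs he.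
have hi m i : (N <= m)%N -> nrm (u (m + i)%N - u m) < e.
  move=> hm; elim: i => [|i IH]; first by rewrite addn0 subrr nrm0.
  rewrite addnS -[u _ - u m](subrKA (u (m + i)%N)); apply: nrmD_lt => //.
  by apply: le_lt_trans (hst _) (hN _ _); apply: leq_trans hm (leq_addr _ _).
exists N => m n hm hnN; have [hmn|/ltnW hnm] := leqP m n.
  by rewrite nrmBC -(subnKC hmn); exact: hi.
by rewrite -(subnKC hnm); exact: hi.
Qed.

End NonArchimedean.

Section PhiBounds.
Variables (R : realType) (K : fieldType) (G : zmodType) (v : K -> R) (k : int)
  (phi : G -> G -> R).

Lemma Phi_ge0 u : 0 <= Phi v k phi u.
Proof. exact: bigmax_ge_id. Qed.

Lemma le_Phi u t :
  t \in [:: v ((2 * (k ^+ 2 - 1))%:~R) * phi u u; v ((k ^+ 2)%:~R) * phi (u *+ 2) u;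
         phi u (u *+ 2); phi (u *~ (k + 1)) u; phi (u *~ (k - 1)) u; phi u u;
         v ((k ^+ 2)%:~R) * phi (u *+ 2) (u *+ 2);
         v ((2 * (k ^+ 2 - 1))%:~R) * phi u (u *+ 2); phi u (u *+ 3);
         phi (u *~ (2 * k + 1)) u; phi (u *~ (2 * k - 1)) u] ->
  t <= Phi v k phi u.
Proof. by move=> ht; exact: (@le_bigmax_seq _ _ _ _ _ t xpredT id ht). Qed.

Lemma PhiMax_ge0 x i n : 0 <= PhiMax v k phi x i n.
Proof. exact: bigmax_ge_id. Qed.

Lemma PhiMax_le_succ x n : PhiMax v k phi x 0 n <= PhiMax v k phi x 0 n.+1.
Proof. exact: le_bigmax_nat. Qed.

Lemma PhiTerm_le_PhiMax x n : PhiTerm v k phi x n <= PhiMax v k phi x 0 n.+1.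
Proof.
by apply: (@le_bigmax_seq _ _ _ _ _ n xpredT (PhiTerm v k phi x)); rewrite ?mem_index_iota ?add0n ?leqnn.
Qed.

Hypothesis hv : nA_valuation v.
Hypothesis h2 : (2%:R : K) != 0.

Lemma v_exp2_gt0 n : 0 < v ((2%:R : K) ^+ n).
Proof. by apply: v_gt0; rewrite // expf_eq0 (negbTE h2) andbF. Qed.

Lemma PhiMax_mulrn_exp2 x i n :
  PhiMax v k phi (x *+ 2 ^ i) 0 n = v ((2%:R : K) ^+ i) * PhiMax v k phi x i n.
Proof.
rewrite /PhiMax add0n.
have -> : \big[Num.max/0]_(i <= j < i + n) PhiTerm v k phi x j =
          \big[Num.max/0]_(0 <= j < n) PhiTerm v k phi x (j + i).
  by rewrite -{1}[i]add0n big_addn addKn.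
have hmax : {morph *%R (v ((2%:R : K) ^+ i)) : a b / Num.max a b}.
  by move=> a b; rewrite maxr_pMr ?(v_ge0 hv).
rewrite (big_morph _ hmax (mulr0 _)); apply: eq_bigr => j _.
rewrite /PhiTerm -mulrnA -expnD addnC -addSn exprD (vM hv) invfM [RHS]mulrC -!mulrA.
by rewrite mulVf ?mulr1 // gt_eqF // v_exp2_gt0.
Qed.

Variables (X : lmodType K) (nrm : X -> R) (f : G -> X).
Hypotheses (hn : nA_norm v nrm) (hodd : forall x, f (- x) = - f x).
Hypothesis hD : forall x y, nrm (Dk k f x y) <= phi x y.

Lemma nrm_double_step_le u :
  v ((k ^+ 2 * (k ^+ 2 - 1))%:~R) *
    nrm ((f (u *+ 2 *+ 2) - f (u *+ 2) *+ 8) - (f (u *+ 2) - f u *+ 8) *+ 2)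
  <= Phi v k phi u.
Proof.
have hf0 : f 0 = 0.
  by apply: (lmod_mulrn_eq0 h2); rewrite mulr2n -{1}oppr0 hodd addNr.
rewrite -(nrmMz hn) (Dk_double_step_identity k hodd hf0 u).
have hz p q (z : int) : nrm (Dk k f p q *~ z) <= phi p q.
  exact: le_trans (nrmMz_le hv hn _ _) (hD p q).
have hk2 p q (z : int) : nrm (Dk k f p q *~ (z * k ^+ 2)) <= v (k ^+ 2)%:~R * phi p q.
  rewrite (nrmMz hn) intrM (vM hv) -mulrA.
  apply: le_trans (ler_wpM2l (v_ge0 hv _) (hD p q)).
  by rewrite ler_piMl ?(v_intr_le1 hv) // mulr_ge0 ?(v_ge0 hv) ?(nrm_ge0 hv hn).
have hl := @le_Phi u.
apply: (nrmD_le hn); last by apply: le_trans (hz _ _ _) _; apply: hl; rewrite !inE eqxx ?orbT.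
apply: (nrmB_le hv hn); last by apply: le_trans (hz _ _ _) _; apply: hl; rewrite !inE eqxx ?orbT.
apply: (nrmB_le hv hn); last by apply: le_trans (hk2 _ _ _) _; apply: hl; rewrite !inE eqxx ?orbT.
apply: (nrmD_le hn); last by apply: le_trans (hz _ _ _) _; apply: hl; rewrite !inE eqxx ?orbT.
apply: (nrmD_le hn); last by apply: le_trans (hz _ _ _) _; apply: hl; rewrite !inE eqxx ?orbT.
apply: (nrmB_le hv hn); last first.
  by rewrite -[k ^+ 2]mul1r; apply: le_trans (hk2 _ _ _) _; apply: hl; rewrite !inE eqxx ?orbT.
apply: (nrmD_le hn); last by apply: le_trans (hD _ _) _; apply: hl; rewrite !inE eqxx ?orbT.
by apply: (nrmB_le hv hn); apply: le_trans (hD _ _) _; apply: hl; rewrite !inE eqxx ?orbT.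
Qed.

End PhiBounds.

Section Construction.
Variables (R : realType) (K : fieldType) (G : zmodType) (X : lmodType K)
  (v : K -> R) (nrm : X -> R) (k : int) (phi : G -> G -> R) (f : G -> X).
Hypotheses (hv : nA_valuation v) (hn : nA_norm v nrm) (hcomp : norm_complete nrm).
Hypothesis hc : ((2 * k ^+ 2 * (k ^+ 2 - 1))%:~R : K) != 0.
Hypothesis hodd : forall x, f (- x) = - f x.
Hypothesis hD : forall x y, nrm (Dk k f x y) <= phi x y.
Hypothesis hPhi_cvg0 : forall x : G,
  (fun m : nat => Phi v k phi (x *+ (2 ^ m))
     / v ((2%:R : K) ^+ m.+1 * ((k ^+ 2 * (k ^+ 2 - 1))%:~R))) @ \oo --> 0.

Let vc := v ((2 * k ^+ 2 * (k ^+ 2 - 1))%:~R).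

Lemma vc_gt0 : 0 < vc. Proof. exact: v_gt0. Qed.

Lemma ler_divr_vc p q : p <= q -> p / vc <= q / vc.
Proof. by move=> h; rewrite ler_pM2r ?invr_gt0 ?vc_gt0. Qed.

Definition gdiff x := f (x *+ 2) - f x *+ 8.

Definition approx n x := ((2%:R : K) ^+ n)^-1 *: gdiff (x *+ 2 ^ n).

Lemma approx_step_le x n : nrm (approx n.+1 x - approx n x) <=
  Phi v k phi (x *+ 2 ^ n) / v ((2%:R : K) ^+ n.+1 * ((k ^+ 2 * (k ^+ 2 - 1))%:~R)).
Proof.
have [h2 _ hc0 _] := const_neq0_facts hc.
have -> : approx n.+1 x - approx n x = ((2%:R : K) ^+ n.+1)^-1 *:
    (gdiff (x *+ 2 ^ n *+ 2) - gdiff (x *+ 2 ^ n) *+ 2).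
  rewrite scalerBr /approx -mulrnA -expnSr -scaler_nat scalerA; congr (_ - _ *: _).
  by rewrite exprSr invfM -mulrA mulVf ?mulr1.
rewrite (nrmZ hn) (vV hv) (vM hv) invfM mulrCA ler_pM2l ?invr_gt0 ?v_exp2_gt0 //.
by rewrite ler_pdivlMr ?v_gt0 // mulrC (nrm_double_step_le hv h2 hn hodd hD).
Qed.

Lemma approx_cvg_ex x : exists l, nrm_cvg nrm (approx^~ x) l.
Proof. exact/hcomp/(nrm_cauchy_steps hv hn (approx_step_le x) (hPhi_cvg0 x)). Qed.

Definition Alim x : X := sval (cid (approx_cvg_ex x)).

Lemma approx_cvg x : nrm_cvg nrm (approx^~ x) (Alim x).
Proof. exact: svalP (cid _). Qed.

Lemma Alim_odd x : Alim (- x) = - Alim x.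
Proof.
apply: (nrm_cvg_unique hv hn (approx_cvg (- x))).
apply: nrm_cvg_ext (nrm_cvgN hv hn (approx_cvg x)) => n.
by rewrite /approx -scalerN /gdiff !mulNrn !hodd; congr (_ *: _); zmod_ring.
Qed.

Lemma Alim_double x : Alim (x *+ 2) = Alim x *+ 2.
Proof.
have [h2 _ _ _] := const_neq0_facts hc.
apply: (nrm_cvg_unique hv hn (approx_cvg (x *+ 2))).
apply: nrm_cvg_ext (nrm_cvgMn hv hn 2 (nrm_cvg_shift (approx_cvg x))) => n.
rewrite /approx -mulrnA -expnS scalerMnl -mulr_natr exprS invfM mulrAC mulVf ?mul1r //.
Qed.

Hypothesis hphi_cvg0 : forall x y : G,
  (fun n : nat => Num.max (phi (x *+ (2 ^ n.+1)) (y *+ (2 ^ n.+1)))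
                    (v (8%:R : K) * phi (x *+ (2 ^ n)) (y *+ (2 ^ n)))
                  / v ((2%:R : K) ^+ n)) @ \oo --> 0.

Lemma Dk_Alim x y : Dk k Alim x y = 0.
Proof.
apply: (nrm_cvg_unique hv hn (nrm_cvg_Dk hv hn k x y approx_cvg)).
apply: (nrm_cvg0_le _ (hphi_cvg0 x y)) => n.
have [h2 _ _ _] := const_neq0_facts hc.
rewrite /approx (DkZ k (fun z => gdiff (z *+ 2 ^ n))) Dk_comp_mulrn (nrmZ hn) (vV hv).
rewrite mulrC ler_pM2r ?invr_gt0 ?v_exp2_gt0 //.
rewrite /gdiff (DkB k (fun z => f (z *+ 2))) (Dk_comp_mulrn k f 2) Dk_mulrn.
rewrite -!mulrnA -expnSr.
apply: (nrmB_le hv hn); first by rewrite le_max hD.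
by rewrite (nrmMn hn) le_max ler_wpM2l ?(v_ge0 hv) ?hD ?orbT.
Qed.

Lemma Alim_additive : additive_fun Alim.
Proof.
have [h2 h3 hc0 _] := const_neq0_facts hc.
apply: diff4_eq0_additive h2 h3 Alim_odd Alim_double _ => p q.
have := Dk_eq0_diff4 Dk_Alim p q.
by rewrite -scaler_int => /eqP; rewrite scaler_eq0 (negbTE hc0) => /eqP.
Qed.

Lemma vc_le : vc <= v ((k ^+ 2 * (k ^+ 2 - 1))%:~R).
Proof.
rewrite /vc; have [_ _ _ ->] := const_neq0_facts hc.
by rewrite (vM hv) ler_piMl ?(v_ge0 hv) ?(v_natr_le1 hv).
Qed.

Lemma gdiff_approx_le x n : nrm (gdiff x - approx n x) <= PhiMax v k phi x 0 n / vc.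
Proof.
have [h2 _ hc0 _] := const_neq0_facts hc.
elim: n => [|n IH].
  by rewrite /approx expr0 invr1 scale1r mulr1n subrr (nrm0 hn) divr_ge0 ?PhiMax_ge0 ?ltW ?vc_gt0.
rewrite -[gdiff x - _](subrKA (approx n x)) addrC.
apply: (nrmD_le hn); last by apply: le_trans IH _; apply/ler_divr_vc/PhiMax_le_succ.
rewrite (nrmBC hv hn); apply: le_trans (approx_step_le x n) _.
apply: le_trans (ler_divr_vc (PhiTerm_le_PhiMax _ _ _ x n)).
rewrite /PhiTerm (vM hv) invfM mulrA ler_wpM2l ?divr_ge0 ?Phi_ge0 ?(v_ge0 hv) //.
by rewrite lef_pV2 ?posrE ?vc_gt0 ?(v_gt0 hv) ?vc_le.
Qed.

Hypothesis hPhiMax_cvg : forall x : G, cvgn (fun n : nat => PhiMax v k phi x 0 n).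

Lemma PhiMax_le_lim x n :
  PhiMax v k phi x 0 n <= limn (fun n => PhiMax v k phi x 0 n).
Proof.
apply: (nondecreasing_cvgn_le _ (@hPhiMax_cvg x)).
exact/nondecreasing_seqP/PhiMax_le_succ.
Qed.

Lemma gdiff_Alim_le x :
  nrm (gdiff x - Alim x) <= limn (fun n => PhiMax v k phi x 0 n) / vc.
Proof.
have hL n : PhiMax v k phi x 0 n / vc <= limn (fun n => PhiMax v k phi x 0 n) / vc.
  exact/ler_divr_vc/PhiMax_le_lim.
apply/ler_addgt0Pr => e he; have [N hN] := @approx_cvg x e he.
rewrite -[gdiff x - _](subrKA (approx N x)); apply: (nrmD_le hn).
  by apply: le_trans (gdiff_approx_le x N) _; apply: le_trans (hL N) _; rewrite lerDl ltW.
apply: le_trans (ltW (hN N (leqnn N))) _.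
by rewrite lerDr (le_trans _ (hL 0%N)) // divr_ge0 ?PhiMax_ge0 ?ltW ?vc_gt0.
Qed.

End Construction.

Section Uniqueness.
Variables (R : realType) (K : fieldType) (G : zmodType) (X : lmodType K)
  (v : K -> R) (nrm : X -> R) (k : int) (phi : G -> G -> R).
Hypotheses (hv : nA_valuation v) (hn : nA_norm v nrm).
Hypothesis h2 : (2%:R : K) != 0.
Variables (c : R) (F : G -> X).
Hypothesis hc : 0 < c.
Hypothesis hPhiMax_cvg : forall x : G, cvgn (fun n : nat => PhiMax v k phi x 0 n).
Hypothesis hPhiMax_tail : forall x : G,
  (fun i : nat => limn (fun n : nat => PhiMax v k phi x i n)) @ \oo --> 0.

Lemma lim_PhiMax_mulrn_exp2 x i :
  limn (fun n => PhiMax v k phi (x *+ 2 ^ i) 0 n) =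
  v ((2%:R : K) ^+ i) * limn (fun n => PhiMax v k phi x i n).
Proof.
have hV : v ((2%:R : K) ^+ i) != 0 by rewrite gt_eqF ?v_exp2_gt0.
have -> : (fun n => PhiMax v k phi x i n) =
    (fun n => (v ((2%:R : K) ^+ i))^-1 * PhiMax v k phi (x *+ 2 ^ i) 0 n).
  by apply: funext => n; rewrite PhiMax_mulrn_exp2 // (mulKf hV).
rewrite (cvg_lim (@Rhausdorff R) (cvgMr (a := _^-1) (@hPhiMax_cvg (x *+ 2 ^ i)))).
by rewrite mulrA divff ?mul1r.
Qed.

(* The distance at x is the distance at 2^i x scaled by 1/|2^i|. *)
Lemma additive_approx_unique (A B : G -> X) :
  additive_fun A -> additive_fun B ->
  (forall x, nrm (F x - A x) <= limn (fun n => PhiMax v k phi x 0 n) / c) ->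
  (forall x, nrm (F x - B x) <= limn (fun n => PhiMax v k phi x 0 n) / c) ->
  B = A.
Proof.
move=> hA hB hAb hBb; apply: funext => x.
apply/subr0_eq/(nrm_le0 hv hn)/ler_addgt0Pr => e he; rewrite add0r.
have hw i : nrm (B x - A x) <= limn (fun n => PhiMax v k phi x i n) / c.
  have := nrmB_le hv hn (hAb (x *+ 2 ^ i)) (hBb (x *+ 2 ^ i)).
  rewrite opprB addrC subrKA (additive_mulrn hB) (additive_mulrn hA) -mulrnBl.
  by rewrite (nrmMn hn) lim_PhiMax_mulrn_exp2 natrX -mulrA ler_pM2l ?v_exp2_gt0.
have [i hi] := cvg0_eventually_lt (@hPhiMax_tail x) (mulr_gt0 he hc).
by apply: le_trans (hw i) _; rewrite ler_pdivrMr // ltW // hi.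
Qed.

End Uniqueness.

Theorem theorem2p2 (R : realType) (K : fieldType) (G : zmodType) (X : lmodType K)
    (v : K -> R) (nrm : X -> R) (k : int) (phi : G -> G -> R) (f : G -> X) :
  nA_valuation v -> nontrivial_valuation v ->
  nA_norm v nrm -> norm_complete nrm ->
  k != 0 -> k != 1 -> k != -1 ->
  ((2 * k ^+ 2 * (k ^+ 2 - 1))%:~R : K) != 0 ->
  (forall x y, 0 <= phi x y) ->
  (forall x y : G,
     (fun n : nat => Num.max (phi (x *+ (2 ^ n.+1)) (y *+ (2 ^ n.+1)))
                       (v (8%:R : K) * phi (x *+ (2 ^ n)) (y *+ (2 ^ n)))
                     / v ((2%:R : K) ^+ n)) @ \oo --> 0) ->
  (forall x : G,
     (fun m : nat => Phi v k phi (x *+ (2 ^ m))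
                     / v ((2%:R : K) ^+ m.+1 * ((k ^+ 2 * (k ^+ 2 - 1))%:~R))) @ \oo --> 0) ->
  (forall x : G, cvgn (fun n : nat => PhiMax v k phi x 0 n)) ->
  (forall x : G, f (- x) = - f x) ->
  (forall x y : G, nrm (Dk k f x y) <= phi x y) ->
  exists A : G -> X,
    [/\ additive_fun A,
        (forall x : G,
           nrm (f (x *+ 2) - f x *+ 8 - A x)
             <= limn (fun n : nat => PhiMax v k phi x 0 n)
                / v ((2 * k ^+ 2 * (k ^+ 2 - 1))%:~R)) &
        ((forall x : G,
            (fun i : nat => limn (fun n : nat => PhiMax v k phi x i n)) @ \oo --> 0) ->
         forall B : G -> X, additive_fun B ->
           (forall x : G,
              nrm (f (x *+ 2) - f x *+ 8 - B x)
                <= limn (fun n : nat => PhiMax v k phi x 0 n)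
                   / v ((2 * k ^+ 2 * (k ^+ 2 - 1))%:~R)) ->
           B = A)].
Proof.
move=> hv _ hn hcomp _ _ _ hc _ hphi hPhi hPhiMax hodd hD.
have [h2 _ _ _] := const_neq0_facts hc.
have hA := Alim_additive hv hn hcomp hc hodd hD hPhi hphi.
have hAb := gdiff_Alim_le hv hn hcomp hc hodd hD hPhi hPhiMax.
exists (Alim hv hn hcomp hc hodd hD hPhi); split => // hPhiMax_tail B hB hBb.
exact: (additive_approx_unique (F := gdiff f) hv hn h2 (v_gt0 hv hc) hPhiMax hPhiMax_tail
  hA hB hAb hBb).
Qed.
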